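(* Let $(V,c)$ be a network and $\Omega\subset V$ a finite subset of size $n$. Let $(\lambda_i,u_i)_{i=1}^n$ be a Dirichlet system for $\Omega$. Then for any $k<n$ and any function $\alpha:V\to\mathbb{R}$, $$\sum_{i=1}^k(\lambda_{k+1}-\lambda_i)^2\Big(\langle\Gamma(\alpha),u_i^2\rangle-\Lambda(\alpha,u_i)\Big)\le\sum_{i=1}^k(\lambda_{k+1}-\lambda_i)\,\big\|u_i\cdot\Delta\alpha-2\Gamma(\alpha,u_i)\big\|^2.$$
   Context: A network is a pair $(V,c)$ with $V$ countable and $c:V\times V\to[0,\infty)$ symmetric with $\pi(x):=\sum_y c(x,y)<\infty$. Set $P(x,y)=c(x,y)/\pi(x)$, $\Delta f(x)=\sum_yP(x,y)(f(x)-f(y))$, $\langle f,g\rangle=\sum_x\pi(x)f(x)\overline{g(x)}$ and $\|f\|^2=\langle f,f\rangle$. Define $2\Gamma(f,g)(x)=\sum_yP(x,y)(f(x)-f(y))\overline{(g(x)-g(y))}$, $\Gamma(f)=\Gamma(f,f)$, and $\Lambda(f,g)=\frac14\sum_{x,y}c(x,y)|f(x)-f(y)|^2|g(x)-g(y)|^2$. For finite $\Omega\subset V$ with $|\Omega|=n$, let $L^2(\Omega)$ be the functions vanishing outside $\Omega$ and $\Delta_\Omega f=\mathbf 1_\Omega\cdot\Delta f$ the Dirichlet Laplacian on $L^2(\Omega)$. A Dirichlet system for $\Omega$ is a collection $(\lambda_i,u_i)_{i=1}^n$ with $\lambda_1\le\cdots\le\lambda_n$ the eigenvalues of $\Delta_\Omega$,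 $u_i$ real-valued, vanishing outside $\Omega$, $\Delta_\Omega u_i=\lambda_iu_i$, and $\langle u_i,u_j\rangle=\mathbf 1_{i=j}$. *)

From HB Require Import structures.
From mathcomp Require Import all_boot all_order all_algebra finmap.
From mathcomp Require Import all_classical all_reals all_analysis.
Set Implicit Arguments. Unset Strict Implicit. Unset Printing Implicit Defensive.
Import Order.TTheory GRing.Theory Num.Theory.
Local Open Scope classical_set_scope.
Local Open Scope ring_scope.

Section Network.
Variables (R : realType) (V : countType).

(* Equals the usual (unordered) sum when the family is absolutely summable. *)
Definition vsum (T : choiceType) (f : T -> R) : R :=
  fine (\esum_(x in [set: T]) (Num.max (f x) 0)%:E) -
  fine (\esum_(x in [set: T]) (Num.max (- f x) 0)%:E).

Definition is_network (c : V -> V -> R) : Prop :=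
  (forall x y, 0 <= c x y) /\ (forall x y, c x y = c y x) /\
  (forall x, summable [set: V] (fun y => (c x y)%:E)).

Variable c : V -> V -> R.

Definition npi (x : V) : R := vsum (c x).
Definition P (x y : V) : R := c x y / npi x.

Definition Lap (f : V -> R) (x : V) : R := vsum (fun y => P x y * (f x - f y)).

Definition Gam2 (f g : V -> R) (x : V) : R :=
  vsum (fun y => P x y * (f x - f y) * (g x - g y)) / 2.
Definition Gam (f : V -> R) := Gam2 f f.

Definition inner (f g : V -> R) : R := vsum (fun x => npi x * f x * g x).
Definition norm2 (f : V -> R) : R := inner f f.

Definition Lam (f g : V -> R) : R :=
  vsum (fun p : V * V => c p.1 p.2 * (f p.1 - f p.2) ^+ 2 * (g p.1 - g p.2) ^+ 2) / 4.

(* Dirichlet system for Omega (|Omega| = n), indexed 0..n-1 *)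
Definition dirichlet_system (Omega : {fset V}) (lam : nat -> R) (u : nat -> V -> R) : Prop :=
  let n := #|` Omega| in
  (forall i j, (i <= j < n)%N -> lam i <= lam j) /\
  (forall i, (i < n)%N -> forall x, x \notin Omega -> u i x = 0) /\
  (forall i, (i < n)%N -> forall x, x \in Omega -> Lap (u i) x = lam i * u i x) /\
  (forall i j, (i < n)%N -> (j < n)%N -> inner (u i) (u j) = (i == j)%:R).

End Network.

(* Let [w_i = u_i Δα - 2Γ(α, u_i)] and [a_ij = <α u_i, u_j>], symmetric in [i, j].
   Pointwise [π w_i = Σ_y c(., y) (α(.) - α(y)) u_i(y)], and since [Δ_Ω] is self-adjoint
   the coefficients of [w_i] on the orthonormal basis [(u_j)] of [L²(Ω)] are
   [(λ_j - λ_i) a_ij].  Parseval then gives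
   [<Γ(α), u_i²> - Λ(α, u_i) = Σ_j (λ_j - λ_i) a_ij²] and, restricting [w_i] to [Ω],
   [‖w_i‖² ≥ Σ_j (λ_j - λ_i)² a_ij²].  After these substitutions the difference of the two
   sides of the claim is [Σ_{i ≤ k} Σ_j (λ_{k+1} - λ_i)(λ_j - λ_i)(λ_j - λ_{k+1}) a_ij²]:
   the terms with [j ≤ k] cancel by antisymmetry in [(i, j)], the others are nonnegative. *)

From HB Require Import structures.
From mathcomp Require Import all_boot all_order all_algebra finmap.
From mathcomp Require Import all_classical all_reals all_analysis.
From mathcomp Require Import lra ring.
Set Implicit Arguments. Unset Strict Implicit. Unset Printing Implicit Defensive.
Import Order.TTheory GRing.Theory Num.Theory.
Local Open Scope classical_set_scope.
Local Open Scope ring_scope.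

Section SummableFamilies.
Variables (R : realType) (T : choiceType).
Implicit Types (f g h : T -> R) (s : seq T).

Definition rsummable f := summable [set: T] (fun x => (f x)%:E).

(* [fine] sends [+oo] to [0]: [nnsum f] is the sum of [f] only for summable [f]. *)
Definition nnsum f := fine (\esum_(x in [set: T]) (f x)%:E).

Lemma vsumE f : vsum f = nnsum f^\+ - nnsum f^\-.
Proof. by []. Qed.

Lemma esum_seq (F : T -> \bar R) s : uniq s -> (forall x, (0 <= F x)%E) ->
  (forall x, x \notin s -> F x = 0%E) ->
  \esum_(x in [set: T]) F x = (\sum_(x <- s) F x)%E.
Proof.
move=> us F0 Fs; rewrite (esumID [set` s]) // [X in (_ + X)%E]esum1 ?adde0.
  by rewrite setTI esum_fset // [RHS]fsbig_seq.
by move=> x [_ /negP]; apply: Fs.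
Qed.

Lemma esum_ge_seq (F : T -> \bar R) s : uniq s -> (forall x, (0 <= F x)%E) ->
  (\sum_(x <- s) F x <= \esum_(x in [set: T]) F x)%E.
Proof.
move=> us F0; apply: esum_ge; exists [set` s]; first by split.
by rewrite [X in (X <= _)%E]fsbig_seq.
Qed.

Lemma esumZl (r : R) f : 0 <= r ->
  \esum_(x in [set: T]) (r * f x)%:E = (r%:E * \esum_(x in [set: T]) (f x)%:E)%E.
Proof.
move=> r0; rewrite /esum -ereal_supZl //; last first.
  by apply/set0P; exists 0%E, set0; rewrite ?fsbig_set0 //; apply: fsets_set0.
rewrite image_comp; congr ereal_sup; apply: eq_imagel => A [finA _] /=.
by rewrite !fsumEFin // -EFinM mulr_fsumr.
Qed.

Lemma rsummable_fin_num f : (forall x, 0 <= f x) -> rsummable f ->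
  \esum_(x in [set: T]) (f x)%:E \is a fin_num.
Proof.
move=> f0; rewrite /rsummable summableE.
by under eq_esum do rewrite gee0_abs ?lee_fin //.
Qed.

Lemma rsummable_le {f g} : (forall x, `|f x| <= `|g x|) -> rsummable g -> rsummable f.
Proof. by move=> fg; apply: le_lt_trans; apply: le_esum => x _; rewrite lee_fin. Qed.

Lemma rsummableD {f g} : rsummable f -> rsummable g -> rsummable (fun x => f x + g x).
Proof. by move=> sf sg; rewrite /rsummable; under eq_fun do rewrite EFinD; exact: summableD. Qed.

Lemma rsummableZ (a : R) {f} : rsummable f -> rsummable (fun x => a * f x).
Proof.
rewrite /rsummable !summableE => /fineK sf.
under eq_esum do rewrite /= normrM.
by rewrite esumZl // -sf -EFinM.
Qed.

Lemma rsummableN {f} : rsummable f -> rsummable (fun x => - f x).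
Proof. by apply: rsummable_le => x; rewrite normrN. Qed.

Lemma rsummable_seq f s : (forall x, x \notin s -> f x = 0) -> rsummable f.
Proof.
move=> fs; rewrite /rsummable /summable (esum_seq (undup_uniq s)).
- by rewrite sumEFin ltry.
- by move=> x.
- by move=> x; rewrite mem_undup => /fs ->; rewrite abse0.
Qed.

Lemma rsummable_sum (I : eqType) (r : seq I) (F : I -> T -> R) :
  (forall i, i \in r -> rsummable (F i)) -> rsummable (fun x => \sum_(i <- r) F i x).
Proof.
elim: r => [|i r IHr] sF.
  by apply: (rsummable_seq (s := [::])) => x _; rewrite big_nil.
under eq_fun do rewrite big_cons.
apply: rsummableD; first by apply: sF; rewrite mem_head.
by apply: IHr => j jr; apply: sF; rewrite in_cons jr orbT.
Qed.

Lemma rsummable_bij (e : T -> T) f : bijective e -> rsummable f -> rsummable (f \o e).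
Proof.
move=> be; rewrite /rsummable /summable (reindex_esum [set: T] [set: T] e) //.
by rewrite setTT_bijective.
Qed.

Lemma fine_pmul (r : R) (y : \bar R) : 0 <= r -> fine (r%:E * y)%E = r * fine y.
Proof.
rewrite le0r => /predU1P[-> | r0]; first by rewrite mul0e mul0r.
case: y => [y | | ] /=; first by [].
- by rewrite gt0_muley ?lte_fin // mulr0.
- by rewrite gt0_muleNy ?lte_fin // mulr0.
Qed.

Lemma nnsumZ (r : R) f : 0 <= r -> nnsum (fun x => r * f x) = r * nnsum f.
Proof. by move=> r0; rewrite /nnsum esumZl // fine_pmul. Qed.

Lemma nnsumD {f g} : (forall x, 0 <= f x) -> (forall x, 0 <= g x) ->
  rsummable f -> rsummable g -> nnsum (fun x => f x + g x) = nnsum f + nnsum g.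
Proof.
move=> f0 g0 sf sg; rewrite /nnsum; under eq_esum do rewrite EFinD.
rewrite esumD => [|x _|x _]; rewrite ?lee_fin //.
by rewrite fineD // rsummable_fin_num.
Qed.

Lemma rsummable_funrpos {f} : rsummable f -> rsummable f^\+.
Proof.
apply: rsummable_le => x; rewrite ger0_norm ?funrpos_ge0 //.
by rewrite /funrpos ge_max ler_norm normr_ge0.
Qed.

Lemma rsummable_funrneg {f} : rsummable f -> rsummable f^\-.
Proof.
apply: rsummable_le => x; rewrite ger0_norm ?funrneg_ge0 //.
by rewrite /funrneg ge_max -normrN ler_norm normr_ge0.
Qed.

Lemma funrposBnegE f x : f^\+ x - f^\- x = f x.
Proof. exact: (congr1 (fun F => F x) (funrposBneg f)). Qed.

Lemma vsum_nneg f : (forall x, 0 <= f x) -> vsum f = nnsum f.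
Proof.
move=> f0; rewrite vsumE /nnsum [X in _ - fine X]esum1 ?subr0; last first.
  by move=> x _; rewrite /funrneg max_r // lerNl oppr0.
by congr fine; apply: eq_esum => x _; rewrite /funrpos max_l.
Qed.

Lemma vsum_ge0 f : (forall x, 0 <= f x) -> 0 <= vsum f.
Proof.
by move=> f0; rewrite vsum_nneg //; apply/fine_ge0/esum_ge0 => x _; rewrite lee_fin.
Qed.

Lemma vsum_split f g h : (forall x, 0 <= g x) -> (forall x, 0 <= h x) ->
  rsummable g -> rsummable h -> (forall x, f x = g x - h x) ->
  vsum f = nnsum g - nnsum h.
Proof.
move=> g0 h0 sg sh fE.
have sf : rsummable f.
  apply: rsummable_le (rsummableD sg sh) => x.
  rewrite fE (ger0_norm (addr_ge0 (g0 x) (h0 x))).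
  by apply: le_trans (ler_normB _ _) _; rewrite !ger0_norm ?g0 ?h0.
have E : nnsum (fun x => f^\+ x + h x) = nnsum (fun x => f^\- x + g x).
  by congr nnsum; apply: funext => x; have := fE x; have := funrposBnegE f x; lra.
have fp := funrpos_ge0 f; have fn := funrneg_ge0 f.
have sfp := rsummable_funrpos sf; have sfn := rsummable_funrneg sf.
by move: E; rewrite vsumE !nnsumD //; lra.
Qed.

Lemma vsumZ (a : R) f : vsum (fun x => a * f x) = a * vsum f.
Proof.
rewrite !vsumE; case: (leP 0 a) => a0.
  by rewrite ge0_funrposM // ge0_funrnegM // !nnsumZ // mulrBr.
have na0 : 0 <= - a by rewrite oppr_ge0 ltW.
by rewrite le0_funrposM ?le0_funrnegM ?(ltW a0) // !nnsumZ //; ring.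
Qed.

Lemma vsumN f : vsum (fun x => - f x) = - vsum f.
Proof. by rewrite -[RHS]mulN1r -vsumZ; congr vsum; apply/funext => x; rewrite mulN1r. Qed.

Lemma vsumD f g : rsummable f -> rsummable g ->
  vsum (fun x => f x + g x) = vsum f + vsum g.
Proof.
move=> sf sg; have [sfp sfn] := (rsummable_funrpos sf, rsummable_funrneg sf).
have [sgp sgn] := (rsummable_funrpos sg, rsummable_funrneg sg).
rewrite (vsum_split (g := fun x => f^\+ x + g^\+ x) (h := fun x => f^\- x + g^\- x)).
- rewrite (nnsumD (funrpos_ge0 f) (funrpos_ge0 g)) //.
  by rewrite (nnsumD (funrneg_ge0 f) (funrneg_ge0 g)) // !vsumE; lra.
- by move=> x; rewrite addr_ge0 ?funrpos_ge0.
- by move=> x; rewrite addr_ge0 ?funrneg_ge0.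
- exact: rsummableD.
- exact: rsummableD.
- by move=> x; rewrite -(funrposBnegE f) -(funrposBnegE g); lra.
Qed.

Lemma vsumB f g : rsummable f -> rsummable g ->
  vsum (fun x => f x - g x) = vsum f - vsum g.
Proof. by move=> sf sg; rewrite (vsumD sf (rsummableN sg)) vsumN. Qed.

Lemma nnsum_seq f s : uniq s -> (forall x, 0 <= f x) ->
  (forall x, x \notin s -> f x = 0) -> nnsum f = \sum_(x <- s) f x.
Proof.
by move=> us f0 fs; rewrite /nnsum (esum_seq us) ?sumEFin // => x /fs ->.
Qed.

Lemma vsum_seq f s : uniq s -> (forall x, x \notin s -> f x = 0) ->
  vsum f = \sum_(x <- s) f x.
Proof.
move=> us fs; rewrite vsumE !(nnsum_seq us) -?sumrB.
- by apply: eq_bigr => x _; rewrite funrposBnegE.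
- exact: funrneg_ge0.
- by move=> x /fs; rewrite /funrneg => ->; rewrite oppr0 maxxx.
- exact: funrpos_ge0.
- by move=> x /fs; rewrite /funrpos => ->; rewrite maxxx.
Qed.

Lemma ler_sum_vsum f s : uniq s -> (forall x, 0 <= f x) -> rsummable f ->
  \sum_(x <- s) f x <= vsum f.
Proof.
move=> us f0 sf; rewrite vsum_nneg // -lee_fin fineK ?rsummable_fin_num //.
by rewrite -sumEFin esum_ge_seq.
Qed.

Lemma vsum_bij (e : T -> T) f : bijective e -> vsum (f \o e) = vsum f.
Proof.
move=> be; have bT : set_bij [set: T] [set: T] e by rewrite setTT_bijective.
rewrite !vsumE /nnsum (reindex_esum _ _ _ (fun x => (f^\+ x)%:E) bT).
by rewrite (reindex_esum _ _ _ (fun x => (f^\- x)%:E) bT).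
Qed.

End SummableFamilies.

Section FiniteSums.
Variable R : realFieldType.

Lemma sum_antisym_eq0 (I : Type) (r : seq I) (h : I -> I -> R) :
  (forall i j, h i j = - h j i) -> \sum_(i <- r) \sum_(j <- r) h i j = 0.
Proof.
move=> hN; set S := (X in X = 0).
suff : S = - S by lra.
rewrite {1}/S exchange_big -sumrN; apply: eq_bigr => j _.
by rewrite -sumrN; apply: eq_bigr => i _.
Qed.

Lemma sqr_sum_le (I : eqType) (r : seq I) (a z : I -> R) : (forall i, 0 <= a i) ->
  (\sum_(i <- r) a i * z i) ^+ 2 <= (\sum_(i <- r) a i) * \sum_(i <- r) a i * z i ^+ 2.
Proof.
move=> a0; set S := \sum_(i <- r) a i; set A := \sum_(i <- r) a i * z i.
set B := \sum_(i <- r) a i * z i ^+ 2.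
have S0 : 0 <= S by exact: sumr_ge0.
have [S_eq0|S_neq0] := eqVneq S 0.
  have : \sum_(i <- r) a i == 0 by rewrite -/S S_eq0.
  rewrite psumr_eq0 // => /allP a_eq0.
  rewrite S_eq0 mul0r /A big_seq big1 ?expr0n // => i /a_eq0 /eqP ->.
  by rewrite mul0r.
have S_gt0 : 0 < S by rewrite lt0r S_neq0.
have : 0 <= \sum_(i <- r) a i * (S * z i - A) ^+ 2.
  by apply: sumr_ge0 => i _; rewrite mulr_ge0 ?sqr_ge0.
rewrite (eq_bigr (fun i => S ^+ 2 * (a i * z i ^+ 2) - 2 * S * A * (a i * z i) + A ^+ 2 * a i));
  last by move=> i _; ring.
rewrite big_split sumrB /= -!mulr_sumr -/A -/B -/S.
have -> : S ^+ 2 * B - 2 * S * A * A + A ^+ 2 * S = S * (S * B - A ^+ 2) by ring.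
by rewrite pmulr_rge0 // subr_ge0.
Qed.

Lemma gap_weighted_sum_le (n k : nat) (lam : nat -> R) (a : nat -> nat -> R) :
  (k < n)%N -> (forall i j, (i <= j < n)%N -> lam i <= lam j) ->
  (forall i j, a i j = a j i) ->
  \sum_(i < k) (lam k - lam i) ^+ 2 * \sum_(j < n) (lam j - lam i) * a i j ^+ 2
  <= \sum_(i < k) (lam k - lam i) * \sum_(j < n) (lam j - lam i) ^+ 2 * a i j ^+ 2.
Proof.
move=> kn lam_mono a_sym; rewrite -subr_ge0 -sumrB.
pose h i j := (lam k - lam i) * (lam j - lam i) * (lam j - lam k) * a i j ^+ 2.
have -> : \sum_(i < k) ((lam k - lam i) * \sum_(j < n) (lam j - lam i) ^+ 2 * a i j ^+ 2 -
     (lam k - lam i) ^+ 2 * \sum_(j < n) (lam j - lam i) * a i j ^+ 2) =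
   \sum_(0 <= i < k) (\sum_(0 <= j < k) h i j + \sum_(k <= j < n) h i j).
  rewrite big_mkord; apply: eq_bigr => i _.
  rewrite -big_cat_nat ?leq0n ?(ltnW kn) // big_mkord !mulr_sumr -sumrB.
  by apply: eq_bigr => j _; rewrite /h; ring.
rewrite big_split /= sum_antisym_eq0 ?add0r => [|i j]; last by rewrite /h a_sym; ring.
rewrite big_nat_cond; apply: sumr_ge0 => i /andP[/andP[_ ik] _].
rewrite big_nat_cond; apply: sumr_ge0 => j /andP[/andP[kj jn] _].
have lam_sub_ge0 p q : (p <= q < n)%N -> 0 <= lam q - lam p.
  by move=> pqn; rewrite subr_ge0 lam_mono.
have ij : (i <= j)%N by rewrite (leq_trans (ltnW ik) kj).
by rewrite /h mulr_ge0 ?sqr_ge0 // !mulr_ge0 // lam_sub_ge0 // ?(ltnW ik) ?ij ?kj ?jn ?kn.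
Qed.

End FiniteSums.

Section OrthonormalFamily.
Variables (R : realFieldType) (V : eqType) (s : seq V) (pi : V -> R).

Definition fdot (f g : V -> R) := \sum_(x <- s) pi x * f x * g x.

Variable u : nat -> V -> R.
Hypothesis u_orthonormal : forall i j, (i < size s)%N -> (j < size s)%N ->
  fdot (u i) (u j) = (i == j)%:R.

(* Orthonormality makes [B] a right inverse of the square matrix [U] of values of the
   [u j], hence also a left inverse: the family is complete. *)
Lemma orthonormal_expansion f x : x \in s ->
  f x = \sum_(j < size s) fdot f (u j) * u j x.
Proof.
move=> xs; set n := size s; pose e (m : 'I_n) := nth x s m.
pose U : 'M[R]_n := \matrix_(j, m) u j (e m).
pose B : 'M[R]_n := \matrix_(m, j) (pi (e m) * u j (e m)).
have UB : U *m B = 1%:M.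
  apply/matrixP => i j; rewrite !mxE -(u_orthonormal (ltn_ord i) (ltn_ord j)).
  rewrite /fdot (big_nth x) big_mkord; apply: eq_bigr => m _; rewrite !mxE /e; ring.
have ix_lt : (index x s < n)%N by rewrite index_mem.
pose ix := Ordinal ix_lt; have <- : e ix = x by rewrite /e nth_index.
have BU m : \sum_(j < n) pi (e m) * u j (e m) * u j (e ix) = (m == ix)%:R.
  have := congr1 (fun M : 'M[R]_n => M m ix) (mulmx1C UB); rewrite !mxE /=.
  by under eq_bigr do rewrite !mxE.
transitivity (\sum_(m < n) f (e m) * \sum_(j < n) pi (e m) * u j (e m) * u j (e ix)).
  rewrite (bigD1 ix) //= BU eqxx mulr1 big1 ?addr0 // => m /negPf m_ix.
  by rewrite BU m_ix mulr0.
under eq_bigr do rewrite mulr_sumr.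
rewrite exchange_big /=; apply: eq_bigr => j _.
rewrite /fdot (big_nth x) big_mkord mulr_suml; apply: eq_bigr => m _; rewrite /e; ring.
Qed.

Lemma parseval f g : fdot f g = \sum_(j < size s) fdot f (u j) * fdot g (u j).
Proof.
rewrite /fdot big_seq; under eq_bigr => x xs do rewrite (orthonormal_expansion g xs) mulr_sumr.
rewrite -big_seq exchange_big /=; apply: eq_bigr => j _.
rewrite [RHS]mulr_suml; apply: eq_bigr => x _; rewrite /fdot; ring.
Qed.

End OrthonormalFamily.

Section SpectralIdentities.
Variables (R : realFieldType) (V : eqType) (s : seq V) (pi : V -> R) (C : V -> V -> R).
Variables (lam : nat -> R) (u w : nat -> V -> R) (alpha : V -> R).
Local Notation n := (size s).

(* For [f] supported on [s], [mixed_energy f / 2 = <Γ(α), f^2> - Λ(α, f)];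
   see [inner_Gam_sub_Lam]. *)
Definition mixed_energy (f : V -> R) :=
  \sum_(x <- s) \sum_(y <- s) C x y * (alpha x - alpha y) ^+ 2 * f x * f y.

Hypothesis C_sym : forall x y, C x y = C y x.
(* [Δ u_j = λ_j u_j] on [s], for the Laplacian [f x - (1 / pi x) \sum_y C x y f y]. *)
Hypothesis u_eigen : forall j x, (j < n)%N -> x \in s ->
  \sum_(y <- s) C x y * u j y = (1 - lam j) * pi x * u j x.
Hypothesis u_orthonormal : forall i j, (i < n)%N -> (j < n)%N ->
  fdot s pi (u i) (u j) = (i == j)%:R.
Hypothesis w_def : forall i x, (i < n)%N -> x \in s ->
  pi x * w i x = \sum_(y <- s) C x y * (alpha x - alpha y) * u i y.

Let a i j := fdot s pi (fun x => alpha x * u i x) (u j).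

Let a_sym i j : a i j = a j i.
Proof. by apply: eq_bigr => x _; ring. Qed.

Let fdot_w i f : (i < n)%N -> fdot s pi (w i) f =
  \sum_(x <- s) \sum_(y <- s) C x y * (alpha x - alpha y) * u i y * f x.
Proof.
move=> i_lt; rewrite /fdot big_seq [RHS]big_seq; apply: eq_bigr => x xs.
by rewrite (w_def i_lt xs) mulr_suml.
Qed.

(* The symmetry of [C] makes the Laplacian self-adjoint. *)
Lemma fdot_w_u i j : (i < n)%N -> (j < n)%N ->
  fdot s pi (w i) (u j) = (lam j - lam i) * a i j.
Proof.
move=> i_lt j_lt; rewrite fdot_w //.
transitivity (\sum_(x <- s) alpha x * u j x * (\sum_(y <- s) C x y * u i y)
    - \sum_(y <- s) alpha y * u i y * (\sum_(x <- s) C y x * u j x)).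
  rewrite [X in _ = _ - X](eq_bigr (fun y => \sum_(x <- s) alpha y * u i y * (C y x * u j x)));
    last by move=> y _; rewrite mulr_sumr.
  rewrite [X in _ = _ - X]exchange_big /= -sumrB; apply: eq_bigr => x _.
  by rewrite mulr_sumr -sumrB; apply: eq_bigr => y _; rewrite (C_sym y x); ring.
rewrite big_seq [X in _ - X = _]big_seq.
under eq_bigr => x xs do rewrite (u_eigen i_lt xs).
under [X in _ - X = _]eq_bigr => x xs do rewrite (u_eigen j_lt xs).
by rewrite -!big_seq /a /fdot mulr_sumr -sumrB; apply: eq_bigr => x _; ring.
Qed.

Lemma fdot_w_w i : (i < n)%N ->
  fdot s pi (w i) (w i) = \sum_(j < n) (lam j - lam i) ^+ 2 * a i j ^+ 2.
Proof.
by move=> i_lt; rewrite (parseval u_orthonormal); apply: eq_bigr => j _; rewrite fdot_w_u //; ring.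
Qed.

Lemma mixed_energyE i : (i < n)%N ->
  mixed_energy (u i) / 2 = \sum_(j < n) (lam j - lam i) * a i j ^+ 2.
Proof.
move=> i_lt.
have -> : mixed_energy (u i) = 2 * fdot s pi (w i) (fun x => alpha x * u i x).
  rewrite /mixed_energy fdot_w // mulr2n mulrDl mul1r [X in _ = _ + X]exchange_big -big_split /=.
  apply: eq_bigr => x _; rewrite -big_split /=; apply: eq_bigr => y _.
  rewrite (C_sym y x); ring.
rewrite mulrC mulKf ?pnatr_eq0 // (parseval u_orthonormal).
by apply: eq_bigr => j _; rewrite fdot_w_u // /a; ring.
Qed.

Lemma finite_gap_ineq k : (k < n)%N ->
  (forall i j, (i <= j < n)%N -> lam i <= lam j) ->
  \sum_(i < k) (lam k - lam i) ^+ 2 * (mixed_energy (u i) / 2)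
  <= \sum_(i < k) (lam k - lam i) * fdot s pi (w i) (w i).
Proof.
move=> kn lam_mono; have ik (i : 'I_k) : (i < n)%N := ltn_trans (ltn_ord i) kn.
under eq_bigr => i _ do rewrite mixed_energyE ?ik //.
under [X in _ <= X]eq_bigr => i _ do rewrite fdot_w_w ?ik //.
exact: gap_weighted_sum_le kn lam_mono a_sym.
Qed.

End SpectralIdentities.

Section Network.
Variables (R : realType) (V : countType) (c : V -> V -> R).
Hypothesis c_ge0 : forall x y, 0 <= c x y.
Hypothesis c_sym : forall x y, c x y = c y x.
Hypothesis c_summable : forall x, rsummable (c x).

Lemma npi_ge0 x : 0 <= npi c x.
Proof. exact: vsum_ge0. Qed.

Lemma sum_c_le_npi x (s : seq V) : uniq s -> \sum_(y <- s) c x y <= npi c x.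
Proof. by move=> us; apply: ler_sum_vsum. Qed.

Lemma npi_P x y : npi c x * P c x y = c x y.
Proof.
rewrite /P; have [npi0|npi_neq0] := eqVneq (npi c x) 0; last by rewrite mulrCA divff ?mulr1.
have := sum_c_le_npi x (s := [:: y]) isT; rewrite big_seq1 npi0 mul0r => c_le0.
by apply/eqP; rewrite eq_le c_le0 c_ge0.
Qed.

Lemma npi_vsumP x (g : V -> R) :
  npi c x * vsum (fun y => P c x y * g y) = vsum (fun y => c x y * g y).
Proof. by rewrite -vsumZ; congr vsum; apply: funext => y; rewrite mulrA npi_P. Qed.

Lemma npi_Gam2 x (f g : V -> R) : npi c x * (2 * Gam2 c f g x) =
  vsum (fun y => c x y * ((f x - f y) * (g x - g y))).
Proof.
rewrite /Gam2 [2 * _]mulrC divfK ?pnatr_eq0 // -npi_vsumP.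
by congr (_ * vsum _); apply: funext => y; rewrite mulrA.
Qed.

(* [u Δα - 2 Γ(α, u)], i.e. the commutator [Δ(αu) - αΔu]. *)
Definition commLap (alpha u : V -> R) x := u x * Lap c alpha x - 2 * Gam2 c alpha u x.

Variables (s : seq V) (alpha : V -> R).
Hypothesis s_uniq : uniq s.
Hypothesis alpha_summable : forall x, x \in s ->
  rsummable (fun y => c x y * (alpha x - alpha y) ^+ 2).

Lemma inner_seq (f g : V -> R) : (forall x, x \notin s -> g x = 0) ->
  inner c f g = fdot s (npi c) f g.
Proof. by move=> gs; apply: vsum_seq => // x /gs ->; rewrite mulr0. Qed.

Lemma Lap_eigen (lam : R) (u : V -> R) x : (forall y, y \notin s -> u y = 0) ->
  Lap c u x = lam * u x -> \sum_(y <- s) c x y * u y = (1 - lam) * npi c x * u x.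
Proof.
move=> us Lu; have cu_summable : rsummable (fun y => c x y * u y).
  by apply: (rsummable_seq (s := s)) => y /us ->; rewrite mulr0.
have := npi_vsumP x (fun y => u x - u y); rewrite -/(Lap c u x) Lu.
rewrite (_ : (fun y => c x y * (u x - u y)) = (fun y => u x * c x y - c x y * u y));
  last by apply: funext => y; ring.
rewrite vsumB ?rsummableZ // vsumZ -/(npi c x) (vsum_seq s_uniq) => [E|y /us ->];
  last by rewrite mulr0.
have -> : \sum_(y <- s) c x y * u y = u x * npi c x - npi c x * (lam * u x) by rewrite E; ring.
ring.
Qed.

Lemma npi_Gam x :
  npi c x * Gam c alpha x = vsum (fun y => c x y * (alpha x - alpha y) ^+ 2) / 2.
Proof.
rewrite (_ : (fun y => _) = (fun y => c x y * ((alpha x - alpha y) * (alpha x - alpha y))));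
  last by apply: funext => y; rewrite expr2.
by rewrite -npi_Gam2 -/(Gam c alpha x); field.
Qed.

Lemma c_diff_summable x : x \in s -> rsummable (fun y => c x y * (alpha x - alpha y)).
Proof.
move=> xs; apply: rsummable_le (rsummableD (c_summable x) (alpha_summable xs)) => y.
have := c_ge0 x y; set d := alpha x - alpha y => cxy_ge0.
have cd2_ge0 : 0 <= c x y + c x y * d ^+ 2 by rewrite addr_ge0 // mulr_ge0 // sqr_ge0.
rewrite normrM (ger0_norm cxy_ge0) (ger0_norm cd2_ge0).
rewrite -[X in _ <= X + _]mulr1 -mulrDr ler_wpM2l //.
rewrite -(real_normK (num_real d)); have := normr_ge0 d; move: `|d| => t; nra.
Qed.

Lemma npi_commLap (u : V -> R) x : (forall y, y \notin s -> u y = 0) ->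
  npi c x * commLap alpha u x =
  \sum_(y <- s) c x y * (alpha x - alpha y) * u y.
Proof.
move=> us; rewrite /commLap mulrBr npi_Gam2.
have cdu_supp y : y \notin s -> c x y * (alpha x - alpha y) * u y = 0.
  by move/us ->; rewrite mulr0.
rewrite -(vsum_seq s_uniq cdu_supp); have [xs|/us ux0] := boolP (x \in s).
  rewrite (_ : (fun y => c x y * ((alpha x - alpha y) * (u x - u y))) =
    (fun y => u x * (c x y * (alpha x - alpha y)) - c x y * (alpha x - alpha y) * u y));
    last by apply: funext => y; ring.
  rewrite vsumB ?rsummableZ ?c_diff_summable ?(rsummable_seq cdu_supp) //.
  by rewrite vsumZ mulrCA /Lap npi_vsumP; ring.
rewrite ux0 mul0r mulr0 sub0r -vsumN; congr vsum; apply: funext => y; ring.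
Qed.

Lemma c_diff2_ge0 x y : 0 <= c x y * (alpha x - alpha y) ^+ 2.
Proof. by rewrite mulr_ge0 ?c_ge0 ?sqr_ge0. Qed.

Lemma esum_c_diff2 x : x \in s ->
  \esum_(y in [set: V]) (c x y * (alpha x - alpha y) ^+ 2)%:E =
  (2 * (npi c x * Gam c alpha x))%:E.
Proof.
move=> xs; rewrite npi_Gam [2 * _]mulrC divfK ?pnatr_eq0 // vsum_nneg => [|y];
  last exact: c_diff2_ge0.
by rewrite /nnsum fineK // (rsummable_fin_num (c_diff2_ge0 x) (alpha_summable xs)).
Qed.

Section SupportedOnSeq.
Variable u : V -> R.
Hypothesis u_supp : forall y, y \notin s -> u y = 0.

Let G (p : V * V) := c p.1 p.2 * (alpha p.1 - alpha p.2) ^+ 2 * u p.1 ^+ 2.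

Let G_ge0 p : 0 <= G p.
Proof. by rewrite /G mulr_ge0 ?c_diff2_ge0 ?sqr_ge0. Qed.

Let esum_G : \esum_(p in [set: V * V]) (G p)%:E =
  (\sum_(x <- s) 2 * (npi c x * Gam c alpha x) * u x ^+ 2)%:E.
Proof.
have -> : [set: V * V] = [set: V] `*`` (fun _ => [set: V]) by apply/seteqP; split.
rewrite -(esum_esum (a := fun x y => (G (x, y))%:E)) => [|x y _ _]; last by rewrite lee_fin.
rewrite (esum_seq s_uniq) => [||x /u_supp ux0]; first last.
- by apply: esum1 => y _; rewrite /G /= ux0 expr0n mulr0.
- by move=> x; apply: esum_ge0 => y _; rewrite lee_fin.
rewrite -sumEFin big_seq [RHS]big_seq; apply: eq_bigr => x xs.
rewrite /G /=; under eq_esum do rewrite mulrC.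
by rewrite esumZl ?sqr_ge0 // esum_c_diff2 // -EFinM mulrC.
Qed.

Let G_summable : rsummable G.
Proof.
rewrite /rsummable /summable; under eq_esum do rewrite gee0_abs ?lee_fin //.
by rewrite esum_G ltry.
Qed.

Lemma LamE : Lam c alpha u =
  \sum_(x <- s) npi c x * Gam c alpha x * u x ^+ 2 - mixed_energy s c alpha u / 2.
Proof.
pose K (p : V * V) := c p.1 p.2 * (alpha p.1 - alpha p.2) ^+ 2 * u p.1 * u p.2.
pose swap (p : V * V) := (p.2, p.1).
have swapK : bijective swap by exists swap; case.
have K_supp p : p \notin [seq (x, y) | x <- s, y <- s] -> K p = 0.
  case: p => x y; rewrite /K /=.
  have [xs|/u_supp ->] := boolP (x \in s); last by rewrite mulr0 mul0r.
  have [ys|/u_supp ->] := boolP (y \in s); last by rewrite mulr0.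
  by rewrite (allpairs_f pair xs ys).
have pairs_uniq : uniq [seq (x, y) | x <- s, y <- s] by apply: allpairs_uniq => // -[? ?] [? ?].
rewrite /Lam (_ : (fun p => _) = (fun p => G p + (G \o swap) p - 2 * K p)); last first.
  by apply: funext => -[x y]; rewrite /G /K /= (c_sym y x); ring.
rewrite vsumB ?rsummableD ?rsummable_bij ?rsummableZ ?(rsummable_seq K_supp) //.
rewrite vsumD ?rsummable_bij // vsum_bij // vsumZ (vsum_seq pairs_uniq K_supp) big_allpairs.
rewrite vsum_nneg // /nnsum esum_G /= /K /mixed_energy /=.
have -> : \sum_(x <- s) 2 * (npi c x * Gam c alpha x) * u x ^+ 2 =
    2 * \sum_(x <- s) npi c x * Gam c alpha x * u x ^+ 2.
  by rewrite mulr_sumr; apply: eq_bigr => x _; ring.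
by move: (\sum_(x <- s) npi c x * _ * _) (\sum_(x <- s) \sum_(y <- s) _) => A B; field.
Qed.

Lemma inner_Gam_sub_Lam :
  inner c (Gam c alpha) (fun x => u x ^+ 2) - Lam c alpha u = mixed_energy s c alpha u / 2.
Proof.
rewrite inner_seq => [|x /u_supp ->]; last by rewrite expr0n.
by rewrite LamE /fdot; ring.
Qed.

Lemma fdot_commLap_le_norm2 :
  fdot s (npi c) (commLap alpha u) (commLap alpha u) <= norm2 c (commLap alpha u).
Proof.
set w := commLap alpha u.
have w2_ge0 x : 0 <= npi c x * w x * w x by rewrite -mulrA mulr_ge0 ?npi_ge0 // -expr2 sqr_ge0.
apply: ler_sum_vsum => //.
(* By Cauchy-Schwarz, [pi w^2] is dominated by the summable family [M]. *)
pose M x := \sum_(y <- s) c x y * (alpha x - alpha y) ^+ 2 * u y ^+ 2.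
have M_ge0 x : 0 <= M x by apply: sumr_ge0 => y _; rewrite mulr_ge0 ?c_diff2_ge0 ?sqr_ge0.
have M_summable : rsummable M.
  apply: rsummable_sum => y ys.
  rewrite (_ : (fun x => _) = (fun x => u y ^+ 2 * (c y x * (alpha y - alpha x) ^+ 2)));
    last by apply: funext => x; rewrite c_sym; ring.
  exact: rsummableZ (alpha_summable ys).
apply: rsummable_le M_summable => x; rewrite !ger0_norm //.
have CS : (npi c x * w x) ^+ 2 <= (\sum_(y <- s) c x y) * M x.
  rewrite /w npi_commLap // /M; under eq_bigr do rewrite -mulrA.
  under [X in _ <= _ * X]eq_bigr do rewrite -mulrA -exprMn.
  exact: sqr_sum_le.
have {}CS : (npi c x * w x) ^+ 2 <= npi c x * M x.
  exact: le_trans CS (ler_wpM2r (M_ge0 x) (sum_c_le_npi x s_uniq)).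
have [npi0|npi_neq0] := eqVneq (npi c x) 0; first by rewrite npi0 !mul0r.
have npi_gt0 : 0 < npi c x by rewrite lt0r npi_neq0 npi_ge0.
by rewrite -(ler_pM2l npi_gt0) (_ : npi c x * _ = (npi c x * w x) ^+ 2); last ring.
Qed.

End SupportedOnSeq.

End Network.

Theorem lemma3p1 (R : realType) (V : countType) (c : V -> V -> R)
  (Omega : {fset V}) (lam : nat -> R) (u : nat -> V -> R) (k : nat) (alpha : V -> R) :
  is_network c ->
  dirichlet_system c Omega lam u ->
  (k < #|` Omega|)%N ->
  (forall x, x \in Omega ->
     summable [set: V] (fun y => (c x y * (alpha x - alpha y) ^+ 2)%:E)) ->
  \sum_(i < k) (lam k - lam i) ^+ 2 *
      (inner c (Gam c alpha) (fun x => u i x ^+ 2) - Lam c alpha (u i))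
  <= \sum_(i < k) (lam k - lam i) *
      norm2 c (fun x => u i x * Lap c alpha x - 2 * Gam2 c alpha (u i) x).
Proof.
move=> [c_ge0 [c_sym c_summable]] [lam_mono [u_supp [u_eigen u_orthonormal]]] kn alpha_summable.
have s_uniq : uniq (enum_fset Omega) := fset_uniq Omega.
have ik (i : 'I_k) : (i < #|` Omega|)%N := ltn_trans (ltn_ord i) kn.
under eq_bigr => i _ do
  rewrite (inner_Gam_sub_Lam c_ge0 c_sym c_summable s_uniq alpha_summable (u_supp i (ik i))).
apply: le_trans (finite_gap_ineq (w := fun i => commLap c alpha (u i)) c_sym _ _ _ kn lam_mono) _.
- by move=> j x j_lt xs; apply: Lap_eigen (u_eigen j j_lt x xs) => //; exact: u_supp.
- by move=> i j i_lt j_lt; rewrite -(inner_seq _ s_uniq) ?u_orthonormal //; exact: u_supp.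
- move=> i x i_lt _.
  exact (npi_commLap c_ge0 c_summable s_uniq alpha_summable x (u_supp i i_lt)).
apply: ler_sum => i _; rewrite ler_wpM2l ?subr_ge0 ?lam_mono ?(ltnW (ltn_ord i)) //.
exact (fdot_commLap_le_norm2 c_ge0 c_sym c_summable s_uniq alpha_summable (u_supp i (ik i))).
Qed.
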